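(* Let $d\ge 2$. There are a constant $C>0$ and $n_0(d)$ depending only on $d$ such that for all $n\ge n_0(d)$: if $\mathcal{F}$, $B_i$ are as in the context, $J\subseteq[n]$ with $|J|\le n/4$, and $K\ge 0$ is a real number with $|E(\mathcal{G}_J)|\ge\binom{n-|J|}{d}-Kn$, then $$|\mathcal{T}_J^2\cup\mathcal{T}_J^3|\le\binom{n-|J|}{d}+C\left(K+\sqrt{Kn^{d-1}}+n^{d-2}\right).$$
   Context: Let $\mathcal{F}=\{F_1,\dots,F_m\}\subseteq\binom{[n]}{d+1}$ consist of distinct sets and have VC-dimension at most $d$ (no $(d+1)$-set $S$ is shattered, i.e. no $S$ such that every $A\subseteq S$ equals $F\cap S$ for some $F\in\mathcal{F}$). For $i\in[m]$, call $B\subsetneq F_i$ admissible for $F_i$ if $F\cap F_i\neq B$ for every $F\in\mathcal{F}$. For each $i$, $B_i$ is a fixed admissible set for $F_i$ of maximum cardinality among all admissible sets. For $J\subseteq[n]$, $\mathcal{G}_J$ is the $d$-uniform hypergraph on vertex set $[n]\setminus J$ with edge set $E(\mathcal{G}_J):=\{F_k\setminus J: k\in[m],\ |F_k\cap J|=1\}$. $\mathcal{T}_J^2$ is the set of $F_k\in\mathcal{F}$ with $B_k\subseteq[n]\setminus J$ and $|B_k|=d$; $\mathcal{T}_J^3$ is the set of $F_k\in\mathcal{F}$ with $|F_k\cap J|=1$, $B_k\subseteq[n]\setminus J$ and $|B_k|=d-1$. *)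

From mathcomp Require Import all_boot.
From Stdlib Require Import Reals.
Set Implicit Arguments. Unset Strict Implicit. Unset Printing Implicit Defensive.

Definition shatters (n m : nat) (F : 'I_m -> {set 'I_n}) (S : {set 'I_n}) : Prop :=
  forall A : {set 'I_n}, A \subset S -> exists k : 'I_m, F k :&: S = A.

Definition VCdim_le (n m : nat) (F : 'I_m -> {set 'I_n}) (d : nat) : Prop :=
  forall S : {set 'I_n}, #|S| = d.+1 -> ~ shatters F S.

Definition admissible (n m : nat) (F : 'I_m -> {set 'I_n}) (i : 'I_m)
  (B : {set 'I_n}) : Prop :=
  B \proper F i /\ forall k : 'I_m, F k :&: F i <> B.

Definition edges_G (n m : nat) (F : 'I_m -> {set 'I_n}) (J : {set 'I_n})
  : {set {set 'I_n}} :=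
  [set F k :\: J | k : 'I_m & #|F k :&: J| == 1].

Definition T2 (n m : nat) (F B : 'I_m -> {set 'I_n}) (J : {set 'I_n}) (d : nat)
  : {set {set 'I_n}} :=
  [set F k | k : 'I_m & (B k \subset ~: J) && (#|B k| == d)].

Definition T3 (n m : nat) (F B : 'I_m -> {set 'I_n}) (J : {set 'I_n}) (d : nat)
  : {set {set 'I_n}} :=
  [set F k | k : 'I_m & [&& #|F k :&: J| == 1, B k \subset ~: J & #|B k| == d.-1]].

(* Let V be the complement of J.  For k in T_J^2 the set B_k, and for k in T_J^3 the
   edge S_k = F_k \ J of G_J, is a d-subset of V.  These sets are pairwise distinct (a
   d-set lying in two members of F is their intersection, which admissibility forbids),
   except that several k in T_J^3 may share an edge.  For k in T_J^3 write
   F_k = {j_k} + S_k and S_k = {x_k} + B_k.  Maximality of B_k shows that at most two k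
   share (S_k, x_k), so at most 2d indices share an edge S, and only shared edges cost
   extra.  If two of them have the same B = A, then y + A is a nonedge for each of the
   |V| - d points y of V \ S; as G_J misses at most Kn d-sets, there are O(K) such S.
   Otherwise S = Z + {x_1, x_2} with |Z| = d - 2; the edges S of this kind above a fixed Z
   are disjoint outside Z, and every two of them are crossed by a nonedge containing Z that
   crosses no third one, so q of them force q(q - 1)/2 nonedges over Z.  Summing over the
   O(n^(d-2)) sets Z and optimizing gives O(n^(d-2) + sqrt(K n^(d-1))) such S. *)

From Stdlib Require Import Reals Lia Lra.
From mathcomp Require Import all_boot zify.
Set Implicit Arguments. Unset Strict Implicit. Unset Printing Implicit Defensive.

Lemma double_count (A B : finType) (X : {set A}) (Y : {set B}) (R : A -> B -> bool) :
  \sum_(x in X) #|[set y in Y | R x y]| = \sum_(y in Y) #|[set x in X | R x y]|.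
Proof.
have card_sum (T : finType) (P : pred T) : #|[set t | P t]| = \sum_(t | P t) 1.
  by rewrite sum1dep_card.
under eq_bigr => x _ do rewrite card_sum.
under [RHS]eq_bigr => y _ do rewrite card_sum.
rewrite (exchange_big_dep (mem Y)) /= => [|x y _ /andP []//].
by apply: eq_bigr => y yY; apply: eq_bigl => x; rewrite yY.
Qed.

Lemma double_count_leq (A B : finType) (X : {set A}) (Y : {set B}) (R : A -> B -> bool) a b :
  (forall x, x \in X -> a <= #|[set y in Y | R x y]|) ->
  (forall y, y \in Y -> #|[set x in X | R x y]| <= b) ->
  a * #|X| <= b * #|Y|.
Proof.
move=> lbX ubY; rewrite [a * _]mulnC [b * _]mulnC -!sum_nat_const.
apply: (@leq_trans (\sum_(x in X) #|[set y in Y | R x y]|)); first exact: leq_sum.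
by rewrite double_count; exact: leq_sum.
Qed.

Lemma leq_bin_exp n k : 'C(n, k) <= n ^ k.
Proof.
have ffact_exp j : n ^_ j <= n ^ j.
  by elim: j => // j IH; rewrite ffactnSr expnS mulnC leq_mul // leq_subr.
by apply: leq_trans (ffact_exp k); rewrite -bin_ffact leq_pmulr // fact_gt0.
Qed.

Lemma leq_mul_tradeoff L M N : (M - 1) * M <= 2 * N -> L * M <= L + L * L + 2 * N.
Proof. by case: (leqP M L.+1) => hM; nia. Qed.

Lemma set1_pick (T : finType) (x0 : T) (A : {set T}) :
  #|A| = 1 -> A = [set odflt x0 [pick x in A]].
Proof.
move/eqP/cards1P => [a ->]; case: pickP => [y|/(_ a)]; last by rewrite inE eqxx.
by rewrite inE => /eqP ->.
Qed.

Lemma setI_eq_of_card (T : finType) (X Y D : {set T}) : X != Y ->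
  #|X| = #|D|.+1 -> #|Y| = #|D|.+1 -> D \subset X -> D \subset Y -> X :&: Y = D.
Proof.
move=> XY cX cY DX DY; apply/esym/eqP; rewrite eqEcard subsetI DX DY /=.
have : #|X :&: Y| <= #|D|.+1 by rewrite -cX subset_leq_card ?subsetIl.
rewrite leq_eqVlt ltnS => /orP [/eqP cI|//].
have IX : X :&: Y = X by apply/eqP; rewrite eqEcard subsetIl cI cX leqnn.
have IY : X :&: Y = Y by apply/eqP; rewrite eqEcard subsetIr cI cY leqnn.
by move: XY; rewrite -{1}IX IY eqxx.
Qed.

Section Counting.
Variables (n m d : nat) (z0 : 'I_n) (F B : 'I_m -> {set 'I_n}) (J : {set 'I_n}).
Hypotheses (d_ge2 : 2 <= d) (F_inj : injective F) (card_F : forall i, #|F i| = d.+1)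
  (B_adm : forall i, admissible F i (B i))
  (B_max : forall i B', admissible F i B' -> #|B'| <= #|B i|).

Let V := ~: J.

(* [I2] and [I3] index T_J^2 and T_J^3.  For [k] in [I3], [F k = jpt k |: edgeJ k] with
   [jpt k \in J], and [edgeJ k = xpt k |: B k]; [z0] only serves as a default for [pick]. *)
Definition I2 := [set k | (B k \subset V) && (#|B k| == d)].
Definition I3 := [set k | [&& #|F k :&: J| == 1, B k \subset V & #|B k| == d.-1]].
Definition edgeJ k := F k :\: J.
Definition jpt k := odflt z0 [pick z in F k :&: J].
Definition xpt k := odflt z0 [pick z in edgeJ k :\: B k].

Lemma I3P k : k \in I3 -> [/\ #|F k :&: J| = 1, B k \subset V & #|B k| = d.-1].
Proof. by rewrite inE => /and3P [/eqP -> -> /eqP ->]. Qed.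

Lemma B_sub_F k : B k \subset F k.
Proof. by case: (B_adm k) => /properP []. Qed.

Lemma edgeJ_sub_V k : edgeJ k \subset V.
Proof. by apply/subsetP => y; rewrite !inE => /andP []. Qed.

Lemma F_capJ k : k \in I3 -> F k :&: J = [set jpt k].
Proof. by case/I3P => cJ _ _; apply: set1_pick. Qed.

Lemma jpt_FJ k : k \in I3 -> jpt k \in F k /\ jpt k \in J.
Proof.
by move=> /F_capJ FJ; apply/andP; rewrite -in_setI FJ set11.
Qed.

Lemma jpt_notin_V k : k \in I3 -> jpt k \notin V.
Proof. by move=> /jpt_FJ [_ jJ]; rewrite inE jJ. Qed.

Lemma F_jpt k : k \in I3 -> F k = jpt k |: edgeJ k.
Proof. by move=> kI; rewrite /edgeJ -(F_capJ kI) setID. Qed.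

Lemma card_edgeJ k : k \in I3 -> #|edgeJ k| = d.
Proof. by move=> kI; have := cardsID J (F k); rewrite (F_capJ kI) cards1 card_F => [[]]. Qed.

Lemma B_sub_edgeJ k : k \in I3 -> B k \subset edgeJ k.
Proof. by case/I3P => _ BV _; rewrite /edgeJ setDE subsetI B_sub_F. Qed.

Lemma edgeJ_xpt k : k \in I3 -> edgeJ k :\: B k = [set xpt k].
Proof.
move=> kI; apply: set1_pick; rewrite cardsD (setIidPr (B_sub_edgeJ kI)) (card_edgeJ kI).
by case/I3P: kI => _ _ ->; lia.
Qed.

Lemma xptP k : k \in I3 -> [/\ xpt k \in edgeJ k, xpt k \notin B k & xpt k \in V].
Proof.
move=> kI; have : xpt k \in edgeJ k :\: B k by rewrite (edgeJ_xpt kI) set11.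
by rewrite inE => /andP [xB xE]; split=> //; apply: (subsetP (edgeJ_sub_V k)).
Qed.

Lemma edgeJ_B k : k \in I3 -> edgeJ k = xpt k |: B k.
Proof.
move=> kI; rewrite -{1}(setID (edgeJ k) (B k)) (setIidPr (B_sub_edgeJ kI)).
by rewrite (edgeJ_xpt kI) setUC.
Qed.

Lemma B_edgeJ k : k \in I3 -> B k = edgeJ k :\ xpt k.
Proof. by move=> kI; rewrite (edgeJ_B kI) setU1K //; case: (xptP kI). Qed.

Lemma I3_inj k k' : k \in I3 -> k' \in I3 -> edgeJ k = edgeJ k' -> jpt k = jpt k' -> k = k'.
Proof. by move=> kI k'I eE jE; apply: F_inj; rewrite (F_jpt kI) (F_jpt k'I) eE jE. Qed.

(* Otherwise [F k' :&: F k = B k] would contradict the admissibility of [B k]. *)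
Lemma cover_B k k' : k \in I3 -> B k \subset F k' -> xpt k \notin F k' -> jpt k \in F k'.
Proof.
move=> kI BF' xF'; apply/negPn/negP => jF'; case: (B_adm k) => _ /(_ k'); apply.
apply/setP => y; rewrite inE; apply/andP/idP => [[yF' yF]|yB]; last first.
  by rewrite (subsetP BF') ?(subsetP (B_sub_F k)).
move: yF; rewrite (F_jpt kI) (edgeJ_B kI) !inE => /or3P [/eqP E|/eqP E|//].
  by rewrite -E yF' in jF'.
by rewrite -E yF' in xF'.
Qed.

Lemma F_cap_eq k k' (D : {set 'I_n}) : k != k' -> #|D| = d ->
  D \subset F k -> D \subset F k' -> F k' :&: F k = D.
Proof.
move=> kk' cD DF DF'; apply: setI_eq_of_card; rewrite ?card_F ?cD //.
by apply: contra kk' => /eqP /F_inj ->.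
Qed.

Definition dsets := [set D : {set 'I_n} | (D \subset V) && (#|D| == d)].
Definition nonedges := [set D in dsets | D \notin edges_G F J].
Definition edges3 := [set edgeJ k | k in I3].

Lemma card_V : #|V| = n - #|J|.
Proof. by rewrite cardsCs setCK card_ord. Qed.

Lemma card_dsets : #|dsets| = 'C(n - #|J|, d).
Proof. by rewrite -card_V -cards_draws. Qed.

Lemma edgeJ_in_edges k : k \in I3 -> edgeJ k \in edges_G F J.
Proof. by move=> kI; apply/imsetP; exists k => //; case: (I3P kI) => cJ _ _; rewrite inE cJ. Qed.

Lemma edgeJ_in_dsets k : k \in I3 -> edgeJ k \in dsets.
Proof. by move=> kI; rewrite inE edgeJ_sub_V (card_edgeJ kI) eqxx. Qed.

Lemma edges_sub_dsets : edges_G F J \subset dsets.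
Proof.
apply/subsetP => D /imsetP [k]; rewrite inE => /eqP cJ ->.
rewrite inE -/(edgeJ k) edgeJ_sub_V /=.
by have := cardsID J (F k); rewrite cJ card_F => [[<-]].
Qed.

Lemma card_nonedges : #|nonedges| + #|edges_G F J| = 'C(n - #|J|, d).
Proof.
rewrite -card_dsets -(cardsID (edges_G F J) dsets) (setIidPr edges_sub_dsets) addnC.
by congr (_ + _); apply: eq_card => D; rewrite !inE andbC.
Qed.

(* Two of these d-subsets of V coinciding would be the intersection of two members of F. *)
Lemma card_I2_edges3 : #|I2| + #|edges3| <= 'C(n - #|J|, d).
Proof.
have B_cap k k' : k \in I2 -> k != k' -> B k \subset F k' -> False.
  move=> kI kk' BF'; case: (B_adm k) => _ /(_ k'); apply.
  by apply: F_cap_eq; rewrite // ?B_sub_F //; move: kI; rewrite inE => /andP [_ /eqP].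
have B_inj : {in I2 &, injective B}.
  move=> k k' kI k'I Bkk'; apply/eqP; apply: contraT => kk'.
  by case: (B_cap k k' kI kk'); rewrite Bkk' B_sub_F.
have disj : [disjoint [set B k | k in I2] & edges3].
  rewrite -setI_eq0; apply/eqP/setP => D; rewrite !inE; apply/negP => /andP [].
  move=> /imsetP [k kI ->] /imsetP [k' k'I BE]; apply: (B_cap k k' kI).
    apply: contraTneq kI => ->; rewrite inE; case: (I3P k'I) => _ _ ->; lia.
  by rewrite BE subsetDl.
rewrite -(card_in_imset B_inj) -cardsUI (disjoint_setI0 disj) cards0 addn0 -card_dsets.
apply: subset_leq_card; rewrite subUset; apply/andP; split.
  by apply/subsetP => D /imsetP [k]; rewrite !inE => /andP [BV cB] ->; rewrite BV.
by apply/subsetP => D /imsetP [k kI ->]; apply: edgeJ_in_dsets.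
Qed.

Lemma in_I3_set (P : pred 'I_m) k : (k \in [set k in I3 | P k]) = (k \in I3) && P k.
Proof. exact: in_set. Qed.

(* The maximality of [B k] forbids [jpt k |: B k] from being admissible. *)
Lemma jpt_B_cap k : k \in I3 -> exists k', F k' :&: F k = jpt k |: B k.
Proof.
move=> kI; case: (I3P kI) => _ BV cB.
have jB : jpt k \notin B k by apply: contra (jpt_notin_V kI); apply: (subsetP BV).
have cA : #|jpt k |: B k| = d by rewrite cardsU1 jB cB; lia.
case: (boolP [exists k', F k' :&: F k == jpt k |: B k]) => [/existsP [k' /eqP] | none].
  by exists k'.
have /B_max : admissible F k (jpt k |: B k).
  split; first by rewrite properEcard subUset sub1set (jpt_FJ kI).1 B_sub_F cA card_F ltnSn.
  by move=> k' cap; apply: (negP none); apply/existsP; exists k'; rewrite cap.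
by rewrite cA cB; lia.
Qed.

Lemma card_xpt_fiber S x : #|[set k in I3 | (edgeJ k == S) && (xpt k == x)]| <= 2.
Proof.
rewrite leqNgt; apply/negP => /card_gt2P [k1 [k2 [k3 [[]]]]].
rewrite !in_I3_set => /and3P [k1I /eqP S1 /eqP x1] /and3P [k2I /eqP S2 /eqP x2].
move=> /and3P [k3I /eqP S3 /eqP x3] [k12 k23 k31].
have B_eq k : k \in I3 -> edgeJ k = S -> xpt k = x -> B k = S :\ x.
  by move=> kI <- <-; apply: B_edgeJ.
have B21 : B k2 = B k1 by rewrite (B_eq k1) ?(B_eq k2).
have B31 : B k3 = B k1 by rewrite (B_eq k1) ?(B_eq k3).
have j_neq ka kb : ka \in I3 -> kb \in I3 -> edgeJ ka = S -> edgeJ kb = S ->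
    ka != kb -> jpt ka != jpt kb.
  by move=> kaI kbI Sa Sb; apply: contra => /eqP /(I3_inj kaI kbI (etrans Sa (esym Sb))) ->.
have [k' capA] := jpt_B_cap k1I.
have BF' : B k1 \subset F k'.
  by apply: subset_trans (subsetIl _ (F k1)); rewrite capA subsetUr.
have xF' : xpt k1 \notin F k'.
  case: (xptP k1I) => xE xB xV; apply/negP => xF'.
  have : xpt k1 \in F k' :&: F k1 by rewrite inE xF' (F_jpt k1I) setU1r.
  rewrite capA !inE (negbTE xB) orbF => /eqP xj.
  by move: (jpt_notin_V k1I); rewrite -xj xV.
have jF' ka : ka \in I3 -> B ka = B k1 -> xpt ka = xpt k1 -> jpt ka \in F k'.
  by move=> kaI Ba xa; apply: (cover_B kaI); rewrite ?Ba ?xa.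
have jB ka : ka \in I3 -> jpt ka \notin B k1.
  case: (I3P k1I) => _ BV _ kaI; apply: contra (jpt_notin_V kaI); exact: (subsetP BV).
have : #|jpt k1 |: (jpt k2 |: (jpt k3 |: B k1))| <= #|F k'|.
  apply/subset_leq_card; rewrite !subUset !sub1set BF' !jF' //; congruence.
rewrite !cardsU1 card_F !inE !negb_or !jB // (j_neq k1 k2) ?(j_neq k1 k3) ?(j_neq k2 k3) //.
  by case: (I3P k1I) => _ _ ->; lia.
by rewrite eq_sym.
Qed.

Definition fiber S := [set k in I3 | edgeJ k == S].

Lemma card_fiber S : #|fiber S| <= 2 * d.
Proof.
case: (set_0Vmem (fiber S)) => [->|[k0]]; first by rewrite cards0.
rewrite in_I3_set => /andP [k0I /eqP <-].
rewrite -(card_edgeJ k0I) -[#|fiber _|]mul1n.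
apply: (@double_count_leq _ _ _ _ (fun k y => xpt k == y)) => [k|y _].
  rewrite in_I3_set => /andP [kI /eqP <-]; apply/card_gt0P; exists (xpt k).
  by rewrite inE eqxx andbT; case: (xptP kI).
apply: leq_trans (card_xpt_fiber (edgeJ k0) y); apply/subset_leq_card/subsetP => k.
by rewrite !inE => /andP [/andP [-> ->] ->].
Qed.

Definition doubled (S A : {set 'I_n}) := [exists k1, exists k2, [&& k1 \in I3, k2 \in I3,
  k1 != k2, edgeJ k1 == S, edgeJ k2 == S, B k1 == A & B k2 == A]].

Definition split_at (Z S : {set 'I_n}) := [exists k1, exists k2, [&& k1 \in I3, k2 \in I3,
  edgeJ k1 == S, edgeJ k2 == S, xpt k1 != xpt k2 & Z == S :\: [set xpt k1; xpt k2]]].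

Definition P1 := [set S | [exists A, doubled S A]].
Definition P2 := [set S | [exists Z, split_at Z S]].

Lemma fiber_gt1 S : 1 < #|fiber S| -> S \in P1 :|: P2.
Proof.
move=> /card_gt1P [k1 [k2 []]]; rewrite !in_I3_set => /andP [k1I S1] /andP [k2I S2] k12.
case: (eqVneq (xpt k1) (xpt k2)) => x12; rewrite !inE; apply/orP; [left|right]; apply/existsP.
  exists (B k1); apply/existsP; exists k1; apply/existsP; exists k2.
  by rewrite k1I k2I k12 S1 S2 eqxx (B_edgeJ k1I) (B_edgeJ k2I) x12 (eqP S1) (eqP S2) eqxx.
exists (S :\: [set xpt k1; xpt k2]); apply/existsP; exists k1; apply/existsP; exists k2.
by rewrite k1I k2I S1 S2 x12 eqxx.
Qed.

Lemma card_I3 : #|I3| <= #|edges3| + 2 * d * (#|P1| + #|P2|).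
Proof.
apply: (@leq_trans (\sum_(S in edges3) #|fiber S|)).
  rewrite -double_count -sum1_card; apply: leq_sum => k kI; apply/card_gt0P.
  by exists (edgeJ k); rewrite inE eqxx andbT; apply: imset_f.
apply: (@leq_trans (\sum_(S in edges3) (1 + 2 * d * (S \in P1 :|: P2)))).
  apply: leq_sum => S _; case: (ltnP 1 #|fiber S|) => [/fiber_gt1 -> | ].
    by rewrite muln1 (leq_trans (card_fiber S)) ?leq_addl.
  by move=> /leq_trans; apply; apply: leq_addr.
rewrite big_split /= sum1_card leq_add2l -big_distrr /= leq_mul2l.
apply/orP; right; apply: leq_trans (leq_card_setU P1 P2).1.
rewrite -sum1_card [X in _ <= X]big_mkcond [X in X <= _]big_mkcond /=.
by apply: leq_sum => S _; case: (S \in edges3); case: (S \in _).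
Qed.

Lemma capJ1_eq k a b : #|F k :&: J| = 1 ->
  a \in F k -> b \in F k -> a \in J -> b \in J -> a = b.
Proof.
move=> c1 aF bF aJ bJ.
by apply: (card_le1_eqP (A := F k :&: J)); rewrite ?c1 // inE ?aF ?bF.
Qed.

Lemma doubledP S A : doubled S A -> exists k1 k2, [/\ k1 \in I3, k2 \in I3,
  jpt k1 != jpt k2, edgeJ k1 = S & [/\ edgeJ k2 = S, xpt k1 = xpt k2, B k1 = A & B k2 = A]].
Proof.
case/existsP => k1 /existsP [k2 /and5P [k1I k2I k12 /eqP S1 /and3P [/eqP S2 /eqP B1 /eqP B2]]].
exists k1, k2; split=> //.
  by apply: contra k12 => /eqP /(I3_inj k1I k2I (etrans S1 (esym S2))) ->.
split=> //; apply: set1_inj.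
by rewrite -(edgeJ_xpt k1I) -(edgeJ_xpt k2I) S1 S2 B1 B2.
Qed.

Lemma doubled_nonedge S A y : doubled S A -> y \in V -> y \notin S -> y |: A \notin edges_G F J.
Proof.
case/doubledP => [k1 [k2 [k1I k2I j12 S1 [S2 x12 B1 B2]]]] yV yS.
apply/negP => /imsetP [k]; rewrite inE => /eqP cJ yA.
have AF : A \subset F k by apply: subset_trans (subsetUr [set y] A) _; rewrite yA subsetDl.
have xF : xpt k1 \notin F k.
  case: (xptP k1I) => xS xB xV; apply/negP => xF.
  have : xpt k1 \in F k :\: J by rewrite inE xF andbT -in_setC.
  rewrite -yA in_setU1 -B1 (negbTE xB) orbF => /eqP xy.
  by rewrite -xy -S1 xS in yS.
have jF ka : ka \in I3 -> B ka = A -> xpt ka = xpt k1 -> jpt ka \in F k.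
  by move=> kaI Ba xa; apply: (cover_B kaI); rewrite ?Ba ?xa.
have := capJ1_eq cJ (jF k1 k1I B1 erefl) (jF k2 k2I B2 (esym x12)).
by move=> /(_ (jpt_FJ k1I).2 (jpt_FJ k2I).2) /eqP; apply/negP.
Qed.

Lemma doubled_edge S A : doubled S A ->
  exists k, [/\ k \in I3, edgeJ k = S, B k = A & S = xpt k |: A].
Proof.
by case/doubledP => [k1 [k2 [k1I _ _ S1 [_ _ B1 _]]]]; exists k1; rewrite -S1 -B1 edgeJ_B.
Qed.

Lemma doubled_inj S S' A : doubled S A -> doubled S' A -> S = S'.
Proof.
move=> dS dS'; case: (doubled_edge dS) => [k [kI _ Bk SA]].
case: (doubled_edge dS') => [k' [k'I Sk' Bk' SA']].
case: (eqVneq (xpt k) (xpt k')) => [xx|nx]; first by rewrite SA SA' xx.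
have [_ x'B x'V] := xptP k'I.
have x'S : xpt k' \notin S by rewrite SA in_setU1 eq_sym (negbTE nx) -Bk'.
by move: (doubled_nonedge dS x'V x'S); rewrite -SA' -Sk' edgeJ_in_edges.
Qed.

(* Each [S] in P1 yields the [#|V| - d] nonedges [y |: A], [y] in [V :\: S], and a
   nonedge [D] arises in this way from at most [d] sets [S], one per [(d-1)]-subset of [D]. *)
Lemma card_P1 : (#|V| - d) * #|P1| <= d * #|nonedges|.
Proof.
apply: (@double_count_leq _ _ _ _ (fun S D => doubled S (S :&: D))) => [S|D DN].
  rewrite inE => /existsP [A dSA]; case: (doubled_edge dSA) => [k [kI Sk Bk SA]].
  have AS : A \subset S by rewrite SA subsetUr.
  have SV : S \subset V by rewrite -Sk edgeJ_sub_V.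
  have y_inj : {in V :\: S &, injective (fun y => y |: A)}.
    move=> y y' yVS _ yy'; have : y \in y' |: A by rewrite -yy' setU11.
    by rewrite in_setU1 => /orP [/eqP //|/(subsetP AS) yS]; rewrite inE yS in yVS.
  have cVS : #|V :\: S| = #|V| - d by rewrite cardsD (setIidPr SV) -Sk card_edgeJ.
  rewrite -cVS -(card_in_imset y_inj); apply/subset_leq_card/subsetP => D.
  case/imsetP => y; rewrite in_setD => /andP [yS yV] ->.
  have SyA : S :&: (y |: A) = A.
    by rewrite setIUr (setIidPr AS) setIC disjoint_setI0 ?set0U ?disjoints1.
  rewrite inE SyA dSA andbT !inE (doubled_nonedge dSA yV yS) andbT subUset sub1set yV.
  rewrite (subset_trans AS SV) cardsU1 (contra (subsetP AS y)) // -Bk.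
  by case: (I3P kI) => _ _ ->; lia.
have S_inj : {in [set S in P1 | doubled S (S :&: D)] &, injective (fun S => S :&: D)}.
  move=> S S'; rewrite !inE => /andP [_ dS] /andP [_ dS'] SD.
  by apply: doubled_inj dS _; rewrite SD.
rewrite -(card_in_imset S_inj).
have cD : #|D| = d by move: DN; rewrite !inE => /andP [/andP [_ /eqP]].
apply: (@leq_trans #|[set A : {set 'I_n} | A \subset D & #|A| == d.-1]|).
  apply/subset_leq_card/subsetP => A /imsetP [S]; rewrite inE => /andP [_ dS] ->.
  rewrite inE subsetIr /=; case: (doubled_edge dS) => [k [kI _ <- _]].
  by case: (I3P kI) => _ _ ->.
by rewrite cards_draws cD -subn1 bin_sub ?bin1 // ltnW.
Qed.

Definition splits Z := [set S | split_at Z S].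

Definition covers (Z : {set 'I_n}) u v a :=
  forall k, u |: Z \subset F k -> v \notin F k -> a \in F k.

Lemma split_atP Z S : split_at Z S -> exists k1 k2, [/\ k1 \in I3, k2 \in I3,
  edgeJ k1 = S, edgeJ k2 = S & [/\ jpt k1 != jpt k2, xpt k1 != xpt k2 & Z = S :\: [set xpt k1; xpt k2]]].
Proof.
case/existsP => k1 /existsP [k2 /and5P [k1I k2I /eqP S1 /eqP S2 /andP [x12 /eqP ZS]]].
exists k1, k2; split=> //; split=> //.
by apply: contraNneq x12 => /(I3_inj k1I k2I (etrans S1 (esym S2))) ->.
Qed.

Lemma split_sub Z S : split_at Z S -> [/\ #|S| = d, S \subset V & Z \subset S].
Proof.
move=> /split_atP [k1 [k2 [k1I _ <- _ [_ _ ->]]]].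
by rewrite card_edgeJ // edgeJ_sub_V subsetDl.
Qed.

Lemma split_struct Z S : split_at Z S -> exists u v a b,
  [/\ S = u |: (v |: Z), u \notin Z, v \notin Z, u != v &
      [/\ a \in J, b \in J, a != b, covers Z u v a & covers Z v u b]].
Proof.
move=> /split_atP [k1 [k2 [k1I k2I S1 S2 [j12 x12 ZS]]]].
have [x1S _ _] := xptP k1I; have [x2S _ _] := xptP k2I; rewrite S1 in x1S; rewrite S2 in x2S.
have SZ : S = xpt k2 |: (xpt k1 |: Z).
  apply/setP => y; rewrite ZS !inE; case: (eqVneq y (xpt k2)) => [->|]; first by rewrite x2S.
  by case: (eqVneq y (xpt k1)) => [->|] //=; rewrite ?x1S ?orbF.
have x1Z : xpt k1 \notin Z by rewrite ZS !inE eqxx.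
have x2Z : xpt k2 \notin Z by rewrite ZS !inE eqxx orbT.
have B1 : B k1 = xpt k2 |: Z.
  by rewrite (B_edgeJ k1I) S1 SZ setUCA setU1K // in_setU1 negb_or x12.
have B2 : B k2 = xpt k1 |: Z.
  by rewrite (B_edgeJ k2I) S2 SZ setU1K // in_setU1 negb_or eq_sym x12.
exists (xpt k2), (xpt k1), (jpt k1), (jpt k2); split=> //; first by rewrite eq_sym.
split=> //; first exact: (jpt_FJ k1I).2; first exact: (jpt_FJ k2I).2.
  by move=> k; rewrite -B1; apply: cover_B.
by move=> k; rewrite -B2; apply: cover_B.
Qed.

Lemma card_split_Z Z S : split_at Z S -> #|Z| = d - 2.
Proof.
move=> SZ; have [cS _ _] := split_sub SZ.
have [u [v [a [b [Suv uZ vZ uv _]]]]] := split_struct SZ.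
by move: cS; rewrite Suv !cardsU1 in_setU1 negb_or uv uZ vZ /=; lia.
Qed.

Lemma covers_mem Z u v a k : covers Z u v a -> u |: Z \subset F k :\: J ->
  v \in V -> v \notin F k :\: J -> a \in F k.
Proof.
move=> cov uZF vV vF; apply: cov (subset_trans uZF (subsetDl _ _)) _.
by apply: contra vF => vFk; rewrite inE vFk andbT -in_setC.
Qed.

Lemma split_disjoint Z S S' p : split_at Z S -> split_at Z S' ->
  p \in S -> p \in S' -> p \notin Z -> S = S'.
Proof.
have key u v a : split_at Z S -> S = u |: (v |: Z) -> covers Z u v a -> a \in J ->
    split_at Z S' -> u \in S' -> S = S'.
  move=> SZ Suv cov aJ S'Z uS'; have [cS SV _] := split_sub SZ.
  have [cS' _ ZS'] := split_sub S'Z.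
  have vV : v \in V by apply: (subsetP SV); rewrite Suv !inE eqxx orbT.
  case: (boolP (v \in S')) => vS'.
    by apply/eqP; rewrite eqEcard cS cS' leqnn andbT Suv !subUset !sub1set uS' vS' ZS'.
  move: S'Z => /split_atP [k1 [k2 [k1I k2I S1 S2 [j12 _ _]]]].
  have a_jpt k : k \in I3 -> edgeJ k = S' -> a = jpt k.
    move=> kI Sk; have [cJ _ _] := I3P kI.
    apply: (capJ1_eq cJ _ (jpt_FJ kI).1 aJ (jpt_FJ kI).2).
    by apply: covers_mem cov _ vV _; rewrite -/(edgeJ k) Sk // subUset sub1set uS'.
  by rewrite -(a_jpt k1) // -(a_jpt k2) ?eqxx in j12.
move=> SZ S'Z pS pS' pZ; have [u [v [a [b [Suv uZ vZ _ [aJ bJ _ covu covv]]]]]] := split_struct SZ.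
have : p \in u |: (v |: Z) by rewrite -Suv.
rewrite !in_setU1 (negbTE pZ) orbF => /orP [/eqP pu|/eqP pv].
  by apply: (key u v a) => //; rewrite -pu.
by apply: (key v u b) => //; [rewrite setUCA | rewrite -pv].
Qed.

Lemma split_notin Z S S' p : split_at Z S -> split_at Z S' -> S != S' ->
  p \in S -> p \notin Z -> p \notin S'.
Proof.
move=> SZ S'Z SS' pS pZ; apply: contra SS' => pS'; apply/eqP.
exact: split_disjoint SZ S'Z pS pS' pZ.
Qed.

Definition crosses (Z D S : {set 'I_n}) := (D :\: Z) :&: S != set0.
Definition nonedges_over (Z : {set 'I_n}) := [set D in nonedges | Z \subset D].

Lemma card_crossed (Z D : {set 'I_n}) : D \in nonedges -> Z \subset D ->
  #|[set S in splits Z | crosses Z D S]| <= 2.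
Proof.
move=> DN ZD; rewrite leqNgt; apply/negP => /card_gt2P [S1 [S2 [S3 [[]]]]].
rewrite !inE => /andP [Z1 /set0Pn [p1 p1S]] /andP [Z2 /set0Pn [p2 p2S]].
move=> /andP [Z3 /set0Pn [p3 p3S]] [S12 S23 S31].
move: p1S p2S p3S; rewrite !inE.
move=> /andP [/andP [p1Z p1D] p1S] /andP [/andP [p2Z p2D] p2S] /andP [/andP [p3Z p3D] p3S].
have p_neq Sa Sb pa pb : split_at Z Sa -> split_at Z Sb -> Sa != Sb ->
    pa \in Sa -> pb \in Sb -> pa \notin Z -> pa != pb.
  move=> Za Zb SaSb paS pbS paZ; apply: contraNneq (split_notin Za Zb SaSb paS paZ).
  by move=> ->.
have : 2 < #|D :\: Z|.
  apply/card_gt2P; exists p1, p2, p3; rewrite !inE p1Z p1D p2Z p2D p3Z p3D.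
  by split; [|split; [exact: (p_neq S1 S2) | exact: (p_neq S2 S3) | exact: (p_neq S3 S1)]].
move: DN; rewrite !inE => /andP [/andP [_ /eqP cD] _].
by rewrite cardsD (setIidPr ZD) cD (card_split_Z Z1) subKn.
Qed.

Lemma crossing_pair Z S S' w u : split_at Z S -> split_at Z S' -> S != S' ->
  w \in S -> w \notin Z -> u \in S' -> u \notin Z -> w |: (u |: Z) \notin edges_G F J ->
  exists D, [/\ D \in nonedges, Z \subset D, crosses Z D S & crosses Z D S'].
Proof.
move=> SZ S'Z SS' wS wZ uS' uZ wuZ; exists (w |: (u |: Z)).
have [_ SV ZS] := split_sub SZ; have [_ S'V _] := split_sub S'Z.
have wu : w != u by apply: contraNneq (split_notin SZ S'Z SS' wS wZ) => ->.
split.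
- rewrite !inE wuZ andbT !subUset !sub1set (subsetP SV) ?(subsetP S'V) ?(subset_trans ZS SV) //=.
  by rewrite !cardsU1 !in_setU1 (negbTE wu) (negbTE wZ) (negbTE uZ) (card_split_Z SZ) !add1n -addn2 subnK.
- by rewrite !subsetU ?subxx ?orbT.
- by apply/set0Pn; exists w; rewrite !inE eqxx wZ wS.
- by apply/set0Pn; exists u; rewrite !inE eqxx orbT uZ uS'.
Qed.

(* If both [u |: (u' |: Z)] and [v |: (u' |: Z)] were edges of G_J, [covers] would put
   [a] and [a'] in the first, [b] and [a'] in the second, and each meets [J] once. *)
Lemma crossing_nonedge Z S S' : split_at Z S -> split_at Z S' -> S != S' ->
  exists D, [/\ D \in nonedges, Z \subset D, crosses Z D S & crosses Z D S'].
Proof.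
move=> SZ S'Z SS'; have S'S : S' != S by rewrite eq_sym.
have [u [v [a [b [Suv uZ vZ uv [aJ bJ ab covu covv]]]]]] := split_struct SZ.
have [u' [v' [a' [_ [Suv' uZ' vZ' uv' [aJ' _ _ covu' _]]]]]] := split_struct S'Z.
have [_ SV _] := split_sub SZ; have [_ S'V _] := split_sub S'Z.
have uS : u \in S by rewrite Suv setU11.
have vS : v \in S by rewrite Suv setU1r ?setU11.
have u'S' : u' \in S' by rewrite Suv' setU11.
have v'S' : v' \in S' by rewrite Suv' setU1r ?setU11.
have u'S := split_notin S'Z SZ S'S u'S' uZ'.
case: (boolP (u |: (u' |: Z) \in edges_G F J)) => [e1|]; last exact: crossing_pair.
case: (boolP (v |: (u' |: Z) \in edges_G F J)) => [e2|]; last exact: crossing_pair.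
move: e1 e2 => /imsetP [k1]; rewrite inE => /eqP cJ1 E1 /imsetP [k2]; rewrite inE => /eqP cJ2 E2.
have neq p q (T : {set 'I_n}) : p \in T -> q \notin T -> p != q.
  by move=> pT; apply: contraNneq => <-.
have out x w : x != w -> x != u' -> x \notin Z -> x \notin w |: (u' |: Z).
  by move=> xw xu xZ; rewrite !in_setU1 negb_or xw negb_or xu.
have [uV vV v'V] : [/\ u \in V, v \in V & v' \in V].
  by split; [apply: (subsetP SV) | apply: (subsetP SV) | apply: (subsetP S'V)].
have uS' := split_notin SZ S'Z SS' uS uZ; have vS' := split_notin SZ S'Z SS' vS vZ.
have a1 : a \in F k1.
  apply: (covers_mem covu) vV _; rewrite -E1 ?setUS ?subsetUr //.
  by rewrite out // ?(neq _ _ _ vS u'S) // eq_sym.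
have a1' : a' \in F k1.
  apply: (covers_mem covu') v'V _; rewrite -E1 ?subsetUr //.
  by rewrite out // ?(neq _ _ _ v'S' uS') // eq_sym.
have b2 : b \in F k2.
  by apply: (covers_mem covv) uV _; rewrite -E2 ?setUS ?subsetUr // out // (neq _ _ _ uS u'S).
have a2' : a' \in F k2.
  apply: (covers_mem covu') v'V _; rewrite -E2 ?subsetUr //.
  by rewrite out // ?(neq _ _ _ v'S' vS') // eq_sym.
by rewrite (capJ1_eq cJ1 a1 a1' aJ aJ') (capJ1_eq cJ2 b2 a2' bJ aJ') eqxx in ab.
Qed.

(* A member [S] crosses at least [#|splits Z| - 1] nonedges over [Z]: one with each other
   member (crossing_nonedge), and no two of these coincide (card_crossed). *)
Lemma card_splits Z : (#|splits Z| - 1) * #|splits Z| <= 2 * #|nonedges_over Z|.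
Proof.
apply: (@double_count_leq _ _ _ _ (fun S D => crosses Z D S)) => [S|D].
  rewrite inE => SZ; rewrite (cardsD1 S) inE SZ add1n subn1 /=.
  rewrite -[#|splits Z :\ S|]mul1n -[X in _ <= X]mul1n.
  apply: (@double_count_leq _ _ _ _ (fun S' D => crosses Z D S')) => [S'|D].
    rewrite !inE => /andP [S'S S'Z]; rewrite eq_sym in S'S.
    have [D [DN ZD crS crS']] := crossing_nonedge SZ S'Z S'S.
    by apply/card_gt0P; exists D; rewrite 3!inE DN ZD crS crS'.
  rewrite 2!inE => /andP [/andP [DN ZD] crS].
  have := card_crossed DN ZD; rewrite (cardsD1 S) !inE SZ crS add1n ltnS.
  by apply/leq_trans/subset_leq_card/subsetP => S'; rewrite !inE andbA.
by rewrite inE => /andP [DN ZD]; apply: card_crossed.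
Qed.

Definition zsets := [set Z : {set 'I_n} | (Z \subset V) && (#|Z| == d - 2)].

Lemma card_P2_sum : #|P2| <= \sum_(Z in zsets) #|splits Z|.
Proof.
apply: (@leq_trans (\sum_(S in P2) #|[set Z in zsets | split_at Z S]|)).
  rewrite -sum1_card; apply: leq_sum => S; rewrite inE => /existsP [Z SZ].
  apply/card_gt0P; exists Z; have [_ SV ZS] := split_sub SZ.
  by rewrite !inE SZ (subset_trans ZS SV) (card_split_Z SZ) eqxx.
rewrite double_count; apply: leq_sum => Z _; apply/subset_leq_card/subsetP => S.
by rewrite !inE => /andP [_ ->].
Qed.

Lemma sum_nonedges_over : \sum_(Z in zsets) #|nonedges_over Z| <= 'C(d, d - 2) * #|nonedges|.
Proof.
rewrite (double_count _ _ (fun Z D : {set 'I_n} => Z \subset D)) mulnC -sum_nat_const.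
apply: leq_sum => D DN; have cD : #|D| = d by move: DN; rewrite !inE => /andP [/andP [_ /eqP]].
rewrite -cD -cards_draws; apply/subset_leq_card/subsetP => Z.
by rewrite !inE cD => /andP [/andP [_ ->] ->].
Qed.

Lemma card_P2 L : L * #|P2| <= #|zsets| * (L + L * L) + 2 * ('C(d, d - 2) * #|nonedges|).
Proof.
apply: (@leq_trans (\sum_(Z in zsets) (L + L * L + 2 * #|nonedges_over Z|))).
  apply: (@leq_trans (\sum_(Z in zsets) L * #|splits Z|)).
    by rewrite -big_distrr leq_mul2l card_P2_sum orbT.
  by apply: leq_sum => Z _; apply: leq_mul_tradeoff; apply: card_splits.
by rewrite big_split /= sum_nat_const -big_distrr leq_add2l leq_mul2l sum_nonedges_over orbT.
Qed.

Lemma card_T23 : #|T2 F B J d :|: T3 F B J d| <= 'C(n - #|J|, d) + 2 * d * (#|P1| + #|P2|).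
Proof.
apply: leq_trans (leq_card_setU _ _).1 _.
have T2I2 : #|T2 F B J d| <= #|I2| by apply: leq_trans (leq_imset_card _ _) _; rewrite cardsE.
have T3I3 : #|T3 F B J d| <= #|I3| by apply: leq_trans (leq_imset_card _ _) _; rewrite cardsE.
apply: leq_trans (leq_add T2I2 (leq_trans T3I3 card_I3)) _.
by rewrite addnA leq_add2r card_I2_edges3.
Qed.

Lemma card_P1_n : 4 * #|J| <= n -> 4 * d <= n -> n * #|P1| <= 2 * d * #|nonedges|.
Proof.
move=> J_small d_small; have nV : n <= 2 * (#|V| - d).
  by rewrite card_V; clear -J_small d_small; lia.
apply: leq_trans (leq_mul nV (leqnn _)) _.
by rewrite -!mulnA leq_mul2l card_P1 orbT.
Qed.

Lemma card_P2_pow L : L * #|P2| <= n ^ (d - 2) * (L + L * L) + 2 * (d ^ 2 * #|nonedges|).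
Proof.
apply: leq_trans (card_P2 L) _; apply: leq_add.
  rewrite leq_mul2r /zsets cards_draws; apply/orP; right.
  by rewrite (leq_trans _ (leq_bin_exp n _)) // leq_bin2l // card_V leq_subr.
by rewrite leq_mul2l leq_mul2r bin_sub ?leq_subr // leq_bin_exp !orbT.
Qed.
End Counting.

Section RealBounds.
Local Open Scope R_scope.

Lemma INR_leq a b : (a <= b)%N -> INR a <= INR b.
Proof. by move/leP; apply: le_INR. Qed.

Lemma INR_addn a b : INR (a + b)%N = INR a + INR b.
Proof. exact: plus_INR. Qed.

Lemma INR_muln a b : INR (a * b)%N = INR a * INR b.
Proof. exact: mult_INR. Qed.

Lemma INR_expn a k : INR (a ^ k)%N = INR a ^ k.
Proof. by elim: k => [|k IH] //=; rewrite expnS INR_muln IH. Qed.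

Lemma le_tradeoff (P w b : R) : 0 < w -> 0 <= b ->
  (forall L : nat, INR L * P <= w * (INR L + INR L * INR L) + b) ->
  P <= 2 * w + 2 * sqrt (b * w).
Proof.
move=> w_gt0 b_ge0 bound; set s := sqrt (b * w).
have s_ge0 : 0 <= s by apply: sqrt_pos.
have s_sq : s * s = b * w by apply: sqrt_sqrt; nra.
have t_ge0 : 0 <= s / w by apply: Rmult_le_pos => //; apply/Rlt_le/Rinv_0_lt_compat.
have [up_gt up_le] := archimed (s / w).
have up_pos : (0 < up (s / w))%Z by apply: lt_IZR; lra.
(* [L] is the least positive integer above [s / w = sqrt (b / w)]. *)
pose L := Z.to_nat (up (s / w)).
have LE : INR L = IZR (up (s / w)) by rewrite INR_IZR_INZ Znat.Z2Nat.id //; lia.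
have wt : s / w * w = s by field; lra.
have L_gt : s < INR L * w by rewrite LE; nra.
have L_le : INR L * w <= s + w by rewrite LE; nra.
have b_le : b <= INR L * s by apply: (Rmult_le_reg_l w) => //; nra.
have L_pos : 0 < INR L by nra.
by apply: (Rmult_le_reg_l (INR L)) => //; have := bound L; nra.
Qed.

Lemma T23_arith (D N K E T C P1 P2 W : R) :
  2 <= D -> 1 <= N -> 0 <= K -> 0 <= E -> 1 <= W ->
  T <= C + 2 * D * (P1 + P2) -> N * P1 <= 2 * D * E -> E <= K * N ->
  P2 <= 2 * W + 2 * sqrt (2 * (D ^ 2 * E) * W) ->
  T <= C + 8 * D ^ 2 * (K + sqrt (K * (N * W)) + W).
Proof.
move=> D_ge2 N_ge1 K_ge0 E_ge0 W_ge1 hT hP1 hE hP2.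
set s := sqrt (K * (N * W)).
have s_ge0 : 0 <= s by apply: sqrt_pos.
have P1_le : P1 <= 2 * D * K by apply: (Rmult_le_reg_l N); nra.
have sqrt_le : sqrt (2 * (D ^ 2 * E) * W) <= 2 * D * s.
  rewrite -[2 * D]sqrt_square; last lra.
  rewrite /s -sqrt_mult; [apply: sqrt_le_1_alt | nra | nra].
  have : 0 <= D ^ 2 * W * (K * N - E) by apply: Rmult_le_pos; nra.
  have : 0 <= D ^ 2 * W * (K * N) by apply: Rmult_le_pos; nra.
  nra.
have P2_le : P2 <= 2 * W + 4 * D * s by lra.
have : 2 * D * (P1 + P2) <= 2 * D * (2 * D * K + (2 * W + 4 * D * s)).
  by apply: Rmult_le_compat_l; lra.
have : 0 <= D ^ 2 * K by nra.
have : 0 <= D * (2 * D - 1) * W by apply: Rmult_le_pos; nra.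
nra.
Qed.

End RealBounds.

(* MathComp rebinds the key [%R]; the statement reads it as Stdlib's real numbers. *)
From Stdlib Require Import Reals.

Theorem claim3p9 :
  forall d : nat, (2 <= d)%N ->
  exists C : R, (0 < C)%R /\
  exists n0 : nat, forall n : nat, (n0 <= n)%N ->
  forall (m : nat) (F B : 'I_m -> {set 'I_n}) (J : {set 'I_n}) (K : R),
    injective F ->
    (forall i, #|F i| = d.+1) ->
    VCdim_le F d ->
    (forall i, admissible F i (B i)) ->
    (forall i (B' : {set 'I_n}), admissible F i B' -> (#|B'| <= #|B i|)%N) ->
    (4 * #|J| <= n)%N ->
    (0 <= K)%R ->
    (INR #|edges_G F J| >= INR 'C(n - #|J|, d) - K * INR n)%R ->
    (INR #|T2 F B J d :|: T3 F B J d|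
      <= INR 'C(n - #|J|, d)
         + C * (K + sqrt (K * INR n ^ (d - 1)) + INR n ^ (d - 2)))%R.
Proof.
move=> d d_ge2; have d_R : (2 <= INR d)%R by apply: (INR_leq d_ge2).
exists (8 * INR d ^ 2)%R; split; first by nra.
exists (4 * d) => n n_ge m F B J K F_inj card_F _ B_adm B_max J_small K_ge0 many_edges.
have n_gt0 : (0 < n)%N by apply: leq_trans n_ge; rewrite muln_gt0 (ltnW d_ge2).
pose z0 := Ordinal n_gt0.
have INR2 : INR 2 = 2%R by rewrite /=; lra.
have T_le := INR_leq (card_T23 z0 J d_ge2 F_inj card_F B_adm B_max).
have P1_le := INR_leq (card_P1_n z0 d_ge2 F_inj card_F B_adm J_small n_ge).
have NE_eq := f_equal INR (card_nonedges J card_F).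
rewrite !(INR_addn, INR_muln, INR2) in T_le P1_le NE_eq.
set p1 := #|P1 d F B J| in T_le P1_le; set p2 := #|P2 d z0 F B J| in T_le.
set ne := #|nonedges d F J| in P1_le NE_eq.
have P2_bound (L : nat) : (INR L * INR p2 <=
    INR n ^ (d - 2) * (INR L + INR L * INR L) + 2 * (INR d ^ 2 * INR ne))%R.
  have := INR_leq (card_P2_pow z0 J d_ge2 F_inj card_F B_adm L).
  by rewrite !(INR_addn, INR_muln, INR_expn) INR2.
have n_R : (1 <= INR n)%R by apply: (INR_leq n_gt0).
have W_ge1 : (1 <= INR n ^ (d - 2))%R by apply: pow_R1_Rle.
have ne_ge0 : (0 <= INR ne)%R by apply: pos_INR.
have b_ge0 : (0 <= 2 * (INR d ^ 2 * INR ne))%R.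
  by apply: Rmult_le_pos; [lra | apply: Rmult_le_pos; [apply: pow_le; lra | done]].
have P2_le := le_tradeoff (Rlt_le_trans _ _ _ Rlt_0_1 W_ge1) b_ge0 P2_bound.
have d1 : (d - 1 = (d - 2).+1)%N by rewrite -subSn.
rewrite d1 -tech_pow_Rmult.
apply: (T23_arith d_R n_R K_ge0 ne_ge0 W_ge1 T_le P1_le _ P2_le); lra.
Qed.
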